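(* Let $k,d\in\mathbb{N}$, $\mathbf{l}\in\mathbb{N}^{d^2}$ and $\mathbf{i}\in I_{\mathbf{l}}$. Define $\Phi_{\mathbf{l},\mathbf{i}}:[0,1]^{d\times d}\to[0,1]^{d\times d}$ by $[\Phi_{\mathbf{l},\mathbf{i}}(X)]_{m,n}=\phi_{l_j,i_j}([X]_{m,n})$ with $j=(m-1)d+n$, for $m,n\in\{1,\dots,d\}$. Then $\Phi_{\mathbf{l},\mathbf{i}}\in \mathcal{C}^{W,L}_{2k+1}(\mathbb{R}^{d\times d},\mathbb{R}^{d\times d})$ (i.e. coincides on $[0,1]^{d\times d}$ with a member of this class) with $W=2d^2$ and $L=\lfloor\frac{5}{2}d\rfloor+3$.
   Context: Hat functions: $\phi(x)=1-|x|$ for $x\in[-1,1]$, $0$ otherwise; for $l\in\mathbb N$, $h_l=2^{-l}$, $x_{l,i}=ih_l$, $\phi_{l,i}(x)=\phi((x-x_{l,i})/h_l)$. For $\mathbf l\in\mathbb N^{d^2}$, $I_{\mathbf l}=\{\mathbf i\in\mathbb N^{d^2}:1\le i_j\le 2^{l_j}-1,\ i_j\text{ odd for all }j\}$. CNN notation: ReLU $\sigma(x)=\max\{x,0\}$ entrywise; $\mathbb R^{d\times d}\cong\mathbb R^{1\times d\times d}$; for $X\in\mathbb R^{c\times d\times d}$, zero padding $[\iota(X)]_{q,m,n}=[X]_{q,m,n}$ if $m,n\in\{1,\dots,d\}$, else $0$; for $K\in\mathbb R^{c'\times c\times(2k+1)\times(2k+1)}$ (indices $s,t\in\{-k,\dots,k\}$),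 $[K*X]_{p,m,n}=\sum_q\sum_{s,t=-k}^k[K]_{p,q,s,t}[\iota(X)]_{q,m+s,n+t}$; $A_{K,\mathbf b}(X)=K*X+\mathbf b\mathbf 1_{d\times d}$, $[\mathbf b\mathbf 1_{d\times d}]_{p,m,n}=b_p$. An $L$-layer ReLU CNN with channels $c_0,\dots,c_L$ and kernel spatial size $2k+1$ is $\sigma\circ A_{K^L,\mathbf b^L}\circ\cdots\circ\sigma\circ A_{K^1,\mathbf b^1}$, $K^l\in\mathbb R^{c_l\times c_{l-1}\times(2k+1)\times(2k+1)}$, $\mathbf b^l\in\mathbb R^{c_l}$; width $\max\{c_1,\dots,c_L\}$, depth $L$. $\mathcal C^{W,L}_{2k+1}(\mathbb R^{c_0\times d\times d},\mathbb R^{c_L\times d\times d})$ is the set of such maps of width $W$ and depth $L$. *)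

From HB Require Import structures.
From mathcomp Require Import all_boot all_order all_algebra.
From mathcomp Require Import reals.
Set Implicit Arguments. Unset Strict Implicit. Unset Printing Implicit Defensive.
Import Order.TTheory GRing.Theory Num.Theory.
Local Open Scope ring_scope.

Section Defs.
Variable R : realType.

Definition hat (x : R) : R := if `|x| <= 1 then 1 - `|x| else 0.
Definition hstep (l : nat) : R := (2%:R : R) ^- l.
Definition hat_li (l i : nat) (x : R) : R := hat ((x - i%:R * hstep l) / hstep l).

Definition in_Il (d : nat) (l i : 'I_(d * d) -> nat) : Prop :=
  forall j, ((1 <= i j)%N && (i j <= 2 ^ l j - 1)%N) && odd (i j).

(* Phi_{l,i}(X)_{m,n} = phi_{l_j,i_j}(X_{m,n}), j = (m-1)d+n (1-based);
   with 0-based indices j = m*d + n = mxvec_index m n. *)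
Definition Phi (d : nat) (l i : 'I_(d * d) -> nat) (X : 'M[R]_d) : 'M[R]_d :=
  \matrix_(m < d, n < d) hat_li (l (mxvec_index m n)) (i (mxvec_index m n)) (X m n).

Definition tensor (c d : nat) := 'I_c -> 'I_d -> 'I_d -> R.

Definition relu (x : R) : R := Num.max x 0.

(* kernel spatial index s : 'I_(2k+1) stands for s - k in {-k..k};
   shifted index m + (s - k), None if outside {0..d-1} (zero padding). *)
Definition shift_idx (d k : nat) (m : 'I_d) (s : 'I_(2 * k + 1)) : option 'I_d :=
  if (k <= m + s)%N then insub (m + s - k)%N else None.

Definition padval (c d k : nat) (X : tensor c d) (q : 'I_c)
    (m n : 'I_d) (s t : 'I_(2 * k + 1)) : R :=
  match @shift_idx d k m s, @shift_idx d k n t with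
  | Some a, Some b => X q a b
  | _, _ => 0
  end.

Definition kernel (c' c k : nat) :=
  'I_c' -> 'I_c -> 'I_(2 * k + 1) -> 'I_(2 * k + 1) -> R.

Definition conv (c' c d k : nat) (K : kernel c' c k) (X : tensor c d) : tensor c' d :=
  fun p m n => \sum_(q < c) \sum_(s < 2 * k + 1) \sum_(t < 2 * k + 1)
                 K p q s t * padval X q m n s t.

Definition cnn_layer (c' c d k : nat) (K : kernel c' c k) (b : 'I_c' -> R)
    (X : tensor c d) : tensor c' d :=
  fun p m n => relu (conv K X p m n + b p).

Fixpoint cnn_eval (d k : nat) (c : nat -> nat)
    (K : forall j, kernel (c j.+1) (c j) k) (b : forall j, 'I_(c j.+1) -> R)
    (n : nat) (X : tensor (c 0%N) d) : tensor (c n) d :=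
  match n as n0 return tensor (c n0) d with
  | 0%N => X
  | n'.+1 => cnn_layer (K n') (b n') (@cnn_eval d k c K b n' X)
  end.

(* f : R^{d x d} -> R^{d x d} coincides on [0,1]^{d x d} with a member of
   C^{W,L}_{2k+1}(R^{1 x d x d}, R^{1 x d x d}): an L-layer ReLU CNN with
   channels c_0 = 1, ..., c_L = 1, width max{c_1..c_L} = W, kernel size 2k+1. *)
Definition CNN_class_on01 (k d W L : nat) (f : 'M[R]_d -> 'M[R]_d) : Prop :=
  exists (c : nat -> nat) (K : forall j, kernel (c j.+1) (c j) k)
         (b : forall j, 'I_(c j.+1) -> R),
    [/\ c 0%N = 1%N, c L = 1%N, (\max_(j < L) c j.+1)%N = W &
        forall X : 'M[R]_d, (forall m n, 0 <= X m n <= 1) ->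
          forall (p : 'I_(c L)) (m n : 'I_d),
            @cnn_eval d k c K b L (fun _ a b => X a b) p m n = f X m n].

End Defs.

From HB Require Import structures.
From mathcomp Require Import all_boot all_order all_algebra.
From mathcomp Require Import reals.
From mathcomp Require Import zify.
From mathcomp.algebra_tactics Require Import ring lra.
Import Order.TTheory GRing.Theory Num.Theory.
Local Open Scope ring_scope.
Set Implicit Arguments. Unset Strict Implicit.

(* The network first keeps the input X in one channel and builds, in two more
   channels, counters that hold m + 1 and n + 1 at entry (m, n): each counting
   layer reads the previous counter at the tap of offset -1 (zero padding gives 0
   on the first row or column) and adds 1, so after d layers the counters are
   exact and further layers leave them unchanged.  From these, one layer computes
   relu (+- w_j) for every position j < d^2, where
     w_j = 2^(l_j) x - i_j + C_j (m d + n - j),   C_j = 2^(l_j) + i_j + 2,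
   so that |w_j| >= 1 whenever j <> m d + n.  The next layer forms
   hat w_j = relu (1 - relu w_j - relu (- w_j)), which vanishes except at
   j = m d + n, where it is phi_(l_j, i_j) (x); the last layer sums these hats. *)

Lemma sum_ord_eq_nat (V : nmodType) n a (F : 'I_n -> V) v :
  (forall q : 'I_n, q = a :> nat -> F q = v) ->
  \sum_(q < n) (if q == a :> nat then F q else 0) = if (a < n)%N then v else 0.
Proof.
move=> Fa; case: ltnP => [lt_an | le_na].
  rewrite (bigD1 (Ordinal lt_an)) //= eqxx Fa // big1 ?addr0 // => q neq_qa.
  by case: eqP => // eq_qa; case/negP: neq_qa; apply/eqP/val_inj.
by rewrite big1 // => q _; case: eqP => // eq_qa; have := ltn_ord q; lia.
Qed.

Lemma sum_ord_eq_nat_mul (R : pzSemiRingType) n a c (G : 'I_n -> R) v :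
  (forall q : 'I_n, q = a :> nat -> G q = v) ->
  \sum_(q < n) (if q == a :> nat then c else 0) * G q = if (a < n)%N then c * v else 0.
Proof.
move=> Ga; rewrite -(sum_ord_eq_nat (F := fun q => c * G q)) => [|q /Ga -> //].
by apply: eq_bigr => q _; case: ifP; rewrite ?mul0r.
Qed.

Lemma sum_ord_eq_nat_mulE (R : pzSemiRingType) n a c (F : nat -> R) :
  \sum_(q < n) (if q == a :> nat then c else 0) * F q = if (a < n)%N then c * F a else 0.
Proof. by rewrite (sum_ord_eq_nat_mul (v := F a) _) => // q ->. Qed.

Lemma sum2_delta_mul (R : pzSemiRingType) (I J : finType) (i0 : I) (j0 : J) a
    (F : I -> J -> R) :
  \sum_i \sum_j (if (i == i0) && (j == j0) then a else 0) * F i j = a * F i0 j0.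
Proof.
rewrite (bigD1 i0) // (bigD1 j0) //= !eqxx big1 => [|j /negbTE->]; last exact: mul0r.
rewrite big1 ?addr0 // => i /negbTE-> /=.
by rewrite big1 // => j _; rewrite mul0r.
Qed.

Section ReluHat.
Variable R : realType.
Implicit Types (w x : R).

Lemma ger0_relu w : 0 <= w -> relu w = w.
Proof. by move=> w_ge0; apply/max_idPl. Qed.

Lemma ler0_relu w : w <= 0 -> relu w = 0.
Proof. by move=> w_le0; apply/max_idPr. Qed.

Lemma hat_ge0 w : 0 <= hat w.
Proof. by rewrite /hat; case: ifP => // h; lra. Qed.

Lemma hat_norm_ge1 w : 1 <= `|w| -> hat w = 0.
Proof.
rewrite /hat le_eqVlt => /orP[/eqP<-|lt1w]; first by rewrite lexx subrr.
by rewrite leNgt lt1w.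
Qed.

Lemma relu_hat w : relu (1 - relu w - relu (- w)) = hat w.
Proof.
have [w_ge0|w_lt0] := lerP 0 w.
  rewrite (ger0_relu w_ge0) (ler0_relu (_ : - w <= 0)) ?oppr_le0 //.
  rewrite /hat ger0_norm //; case: lerP => h; first by rewrite ger0_relu; lra.
  by rewrite ler0_relu; lra.
rewrite (ler0_relu (ltW w_lt0)) (ger0_relu (_ : 0 <= - w)) ?oppr_ge0 ?ltW //.
rewrite /hat ltr0_norm //; case: lerP => h; first by rewrite ger0_relu; lra.
by rewrite ler0_relu; lra.
Qed.

Lemma hat_liE l i x : hat_li l i x = hat (2%:R ^+ l * x - i%:R).
Proof.
rewrite /hat_li /hstep; congr hat; field.
by rewrite expf_neq0 // pnatr_eq0.
Qed.

Lemma ramp_norm_ge1 (a b x z : R) : 0 <= a -> 0 <= b -> 0 <= x <= 1 ->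
  1 <= z \/ z <= -1 -> 1 <= `|a * x - b + (a + b + 2) * z|.
Proof.
move=> a_ge0 b_ge0 /andP[x_ge0 x_le1] z_far; rewrite ler_normr.
by case: z_far => z_far; apply/orP; [left | right]; nra.
Qed.

End ReluHat.

Section ThreeTapKernel.
Variables (R : realType) (k : nat).

Fact tap_mid_subproof : (k < 2 * k + 1)%N. Proof. lia. Qed.
Fact tap_prev_subproof : (k.-1 < 2 * k + 1)%N. Proof. lia. Qed.

(* Kernel index [s] stands for the offset [s - k]: these are the offsets 0 and -1,
   the latter only when [0 < k]. *)
Definition tap_mid : 'I_(2 * k + 1) := Ordinal tap_mid_subproof.
Definition tap_prev : 'I_(2 * k + 1) := Ordinal tap_prev_subproof.

Definition kernel3 (a b c : R) (s t : 'I_(2 * k + 1)) : R :=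
  (if (s == tap_mid) && (t == tap_mid) then a else 0) +
  (if (s == tap_prev) && (t == tap_mid) then b else 0) +
  (if (s == tap_mid) && (t == tap_prev) then c else 0).

Lemma conv_kernel3 c' c d (A B C : 'I_c' -> 'I_c -> R) (X : tensor R c d) p m n :
  conv (fun p q => kernel3 (A p q) (B p q) (C p q)) X p m n =
  \sum_(q < c) (A p q * padval X q m n tap_mid tap_mid
              + B p q * padval X q m n tap_prev tap_mid
              + C p q * padval X q m n tap_mid tap_prev).
Proof.
apply: eq_bigr => q _.
under eq_bigr do under eq_bigr do rewrite /kernel3 !mulrDl.
under eq_bigr do rewrite !big_split /=.
by rewrite !big_split /= !sum2_delta_mul.
Qed.

Variable d : nat.
Implicit Types (m n : 'I_d).

Lemma shift_idx_mid m : shift_idx m tap_mid = Some m.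
Proof. by rewrite /shift_idx /= leq_addl addnK valK. Qed.

Hypothesis k_gt0 : (0 < k)%N.

Lemma shift_idx_prev m :
  shift_idx m tap_prev = if (0 < m)%N then insub m.-1 else None.
Proof.
rewrite /shift_idx /=; case: (posnP m) => [->|m_gt0]; first by rewrite ifF //; lia.
by rewrite ifT; [congr insub|]; lia.
Qed.

Lemma padval_mid c (X : tensor R c d) q m n : padval X q m n tap_mid tap_mid = X q m n.
Proof. by rewrite /padval !shift_idx_mid. Qed.

Lemma padval_up (g : nat -> R) c (X : tensor R c d) q m n :
  g 0%N = 0 -> (forall m' : 'I_d, X q m' n = g m'.+1) ->
  padval X q m n tap_prev tap_mid = g m.
Proof.
move=> g0 Xg; rewrite /padval shift_idx_prev shift_idx_mid.
case: (posnP m) => [->|m_gt0] //=.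
have lt_m1d : (m.-1 < d)%N by have := ltn_ord m; lia.
by rewrite insubT /= Xg /= prednK.
Qed.

Lemma padval_left (g : nat -> R) c (X : tensor R c d) q m n :
  g 0%N = 0 -> (forall n' : 'I_d, X q m n' = g n'.+1) ->
  padval X q m n tap_mid tap_prev = g n.
Proof.
move=> g0 Xg; rewrite /padval shift_idx_prev shift_idx_mid.
case: (posnP n) => [->|n_gt0] //=.
have lt_n1d : (n.-1 < d)%N by have := ltn_ord n; lia.
by rewrite insubT /= Xg /= prednK.
Qed.

End ThreeTapKernel.

Section Construction.
Variables (R : realType) (k d : nat) (l i : 'I_(d * d) -> nat).
Hypotheses (k_gt0 : (0 < k)%N) (d_gt0 : (0 < d)%N).
Variable L0 : nat.
Hypothesis le_d_L0 : (d <= L0)%N.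

Local Notation D := (d * d)%N.

(* Layers [0, L0) carry X in channel 0 and the row and column counters in
   channels 1 and 2; layer L0 has the 2 d^2 ramp channels (sign + for p < d^2),
   layer L0 + 1 the d^2 hats and layer L0 + 2 their sum.  For d = 1 the counters
   are dropped, as 3 channels would exceed the width 2 d^2, and the position is 0. *)
Definition chan_count : nat := if (1 < d)%N then 3 else 1.

Definition chan (t : nat) : nat :=
  if t == 0%N then 1 else if (t <= L0)%N then chan_count
  else if t == L0.+1 then 2 * D else if t == L0.+2 then D else 1.

Definition entry0 : 'I_d := Ordinal d_gt0.
Definition entry (pos : nat) : 'I_D :=
  mxvec_index (insubd entry0 (pos %/ d)%N) (insubd entry0 (pos %% d)%N).

Definition slope (pos : nat) : R := 2%:R ^+ l (entry pos).
Definition offset (pos : nat) : R := (i (entry pos))%:R.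
Definition gap (pos : nat) : R := slope pos + offset pos + 2.
Definition ramp (pos : nat) (x : R) (pos' : nat) : R :=
  slope pos * x - offset pos + gap pos * (pos'%:R - pos%:R).

Definition sgn (p : nat) : R := if (p < D)%N then 1 else -1.
Definition counter_origin : nat := if (1 < d)%N then d.+1 else 0.

Definition kmid (j p q : nat) : R :=
  if (j < L0)%N then (if (p == 0%N) && (q == 0%N) then 1 else 0)
  else if j == L0 then
    let pos := (p %% D)%N in
    sgn p * (if q == 0%N then slope pos
             else if q == 1%N then gap pos * d%:R
             else if q == 2%N then gap pos else 0)
  else if j == L0.+1 then (if q == p then -1 else 0) + (if q == (p + D)%N then -1 else 0)
  else if j == L0.+2 then 1 else 0.
Definition kup (j p q : nat) : R :=
  if (j < L0)%N && (p == 1%N) && (q == 1%N) then 1 else 0.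
Definition kleft (j p q : nat) : R :=
  if (j < L0)%N && (p == 2%N) && (q == 2%N) then 1 else 0.
Definition bias (j p : nat) : R :=
  if (j < L0)%N then (if (p == 1%N) || (p == 2%N) then 1 else 0)
  else if j == L0 then
    let pos := (p %% D)%N in sgn p * (- offset pos - gap pos * (counter_origin + pos)%:R)
  else if j == L0.+1 then 1 else 0.

Definition net_kernel (j : nat) : kernel R (chan j.+1) (chan j) k :=
  fun p q => kernel3 (kmid j p q) (kup j p q) (kleft j p q).
Definition net_bias (j : nat) : 'I_(chan j.+1) -> R := fun p => bias j p.

Definition net (X : 'M[R]_d) (t : nat) : tensor R (chan t) d :=
  @cnn_eval R d k chan net_kernel net_bias t (fun _ m n => X m n).
Arguments net X t : clear implicits.

Lemma netS X t p m n : net X t.+1 p m n = relu (\sum_(q < chan t)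
    (kmid t p q * padval (net X t) q m n (tap_mid k) (tap_mid k)
   + kup t p q * padval (net X t) q m n (tap_prev k) (tap_mid k)
   + kleft t p q * padval (net X t) q m n (tap_mid k) (tap_prev k)) + bias t p).
Proof.
by rewrite -(conv_kernel3 k (fun p q => kmid t p q) (fun p q => kup t p q)
                          (fun p q => kleft t p q)).
Qed.

Lemma chan_gt0 t : (0 < chan t)%N.
Proof. by rewrite /chan /chan_count; repeat case: ifP; nia. Qed.

Lemma chan_counting t : (0 < t <= L0)%N -> chan t = chan_count.
Proof. by move=> /andP[t_gt0 le_tL0]; rewrite /chan le_tL0 ifF //; lia. Qed.

Lemma chan_ramps : chan L0.+1 = (2 * D)%N.
Proof. by rewrite /chan; repeat case: ifP => //; lia. Qed.

Lemma chan_hats : chan L0.+2 = D.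
Proof. by rewrite /chan; repeat case: ifP => //; lia. Qed.

Lemma chan_out : chan L0.+3 = 1%N.
Proof. by rewrite /chan; repeat case: ifP => //; lia. Qed.

Definition counter_val (X : 'M[R]_d) (t p : nat) (m n : 'I_d) : R :=
  if p == 0%N then X m n else if p == 1%N then (minn m.+1 t)%:R else (minn n.+1 t)%:R.

Lemma counter_step t a u (G : 'I_(chan t) -> R) :
  (0 < a < chan t.+1)%N -> (t < L0)%N ->
  (forall q : 'I_(chan t), q = a :> nat -> G q = (minn u t)%:R) ->
  relu (\sum_(q < chan t) (if q == a :> nat then 1 else 0) * G q + 1) = (minn u.+1 t.+1)%:R.
Proof.
move=> /andP[a_gt0 lt_a_nch] lt_tL0 Ga; rewrite (sum_ord_eq_nat_mul _ Ga) mul1r.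
have -> : (if (a < chan t)%N then (minn u t)%:R else 0) = (minn u t)%:R :> R.
  case: (posnP t) => [->|t_gt0]; first by rewrite minn0; case: ifP.
  have -> : chan t = chan t.+1 by rewrite !chan_counting //; lia.
  by rewrite lt_a_nch.
by rewrite ger0_relu // natr1 -minnSS.
Qed.

Lemma net_counters (X : 'M[R]_d) : (forall m n, 0 <= X m n) ->
  forall t, (t <= L0)%N -> forall (p : 'I_(chan t)) m n, net X t p m n = counter_val X t p m n.
Proof.
move=> X_ge0; elim=> [|t IH] lt_tL0 p m n.
  by have := ltn_ord p; rewrite /counter_val /=; case: (nat_of_ord p).
have lt_p : (p < chan_count)%N by rewrite -(chan_counting (_ : 0 < t.+1 <= L0)%N) ?ltn_ord.
have IHt := IH (ltnW lt_tL0).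
rewrite netS /kmid /kup /kleft /bias lt_tL0 /= /counter_val.
case: eqP => [p0|p_neq0]; last case: eqP => [p1|p_neq1].
- rewrite p0 /=; under eq_bigr do rewrite !mul0r !addr0.
  rewrite (sum_ord_eq_nat_mul (v := X m n) _) => [|q q0]; last first.
    by rewrite padval_mid IHt /counter_val q0.
  by rewrite chan_gt0 mul1r addr0 ger0_relu.
- rewrite p1 /=; under eq_bigr do rewrite !mul0r add0r addr0.
  apply: (counter_step (a := 1) (u := m)) => //.
    by have := ltn_ord p; rewrite p1.
  move=> q q1; apply: (padval_up k_gt0 (g := fun m => (minn m t)%:R)) => [|m'].
    by rewrite /= min0n.
  by rewrite IHt /counter_val q1.
- have p2 : p = 2%N :> nat by move: lt_p; rewrite /chan_count; case: ifP; lia.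
  rewrite p2 /=; under eq_bigr do rewrite !mul0r !add0r.
  apply: (counter_step (a := 2) (u := n)) => //.
    by have := ltn_ord p; rewrite p2.
  move=> q q2; apply: (padval_left k_gt0 (g := fun n => (minn n t)%:R)) => [|n'].
    by rewrite /= min0n.
  by rewrite IHt /counter_val q2.
Qed.

Lemma net_ramps (X : 'M[R]_d) : (forall m n, 0 <= X m n) ->
  forall (p : 'I_(chan L0.+1)) m n,
  net X L0.+1 p m n = relu (sgn p * ramp (p %% D) (X m n) (m * d + n)).
Proof.
move=> X_ge0 p m n; rewrite netS /kmid /kup /kleft /bias ltnn eqxx /=.
under eq_bigr => q _ do rewrite !mul0r !addr0 padval_mid net_counters //.
rewrite chan_counting ?leqnn; last by lia.
rewrite /chan_count /counter_origin /ramp; case: ltnP => [d_gt1|d_le1].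
  rewrite !big_ord_recl big_ord0 /counter_val /=.
  have minn_L0 (a : 'I_d) : minn a.+1 L0 = a.+1 by apply/minn_idPl/(leq_trans _ le_d_L0).
  rewrite !minn_L0.
  by congr relu; rewrite !natrD !natrM -!natr1; ring.
have m0 : m = 0%N :> nat by have := ltn_ord m; lia.
have n0 : n = 0%N :> nat by have := ltn_ord n; lia.
rewrite big_ord_recl big_ord0 m0 n0 /counter_val /=; congr relu; ring.
Qed.

Lemma net_hats (X : 'M[R]_d) : (forall m n, 0 <= X m n) ->
  forall (p : 'I_(chan L0.+2)) m n, net X L0.+2 p m n = hat (ramp p (X m n) (m * d + n)).
Proof.
move=> X_ge0 p m n.
have lt_pD : (p < D)%N by rewrite -chan_hats ltn_ord.
have [lt_L0 eq_L0] : (L0.+1 < L0)%N = false /\ (L0.+1 == L0) = false by split; lia.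
rewrite netS /kmid /kup /kleft /bias lt_L0 eq_L0 eqxx.
under eq_bigr do rewrite !mul0r !addr0 padval_mid net_ramps // mulrDl.
set w := fun q => relu (sgn q * ramp (q %% D) (X m n) (m * d + n)).
have [lt_p2D lt_pD2D] : (p < 2 * D)%N /\ (p + D < 2 * D)%N by split; lia.
rewrite big_split /= !(sum_ord_eq_nat_mulE _ _ _ w) chan_ramps lt_p2D lt_pD2D.
rewrite /w /sgn lt_pD ifF; last by lia.
rewrite modnDr modn_small // -relu_hat !mul1r !mulN1r; congr relu; ring.
Qed.

Lemma hat_ramp_far (x : R) pos pos' : 0 <= x <= 1 -> pos != pos' -> hat (ramp pos x pos') = 0.
Proof.
move=> x01 neq_pos; apply/hat_norm_ge1/ramp_norm_ge1; rewrite ?exprn_ge0 ?ler0n //.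
case: (ltngtP pos pos') neq_pos => [lt_pos|lt_pos|->]; rewrite ?eqxx // => _.
  by left; rewrite -natrB 1?ltnW // ler1n subn_gt0.
by right; rewrite -opprB -natrB 1?ltnW // lerN2 ler1n subn_gt0.
Qed.

Lemma entryE (m n : 'I_d) : entry (m * d + n) = mxvec_index m n.
Proof.
rewrite /entry divnMDl // divn_small // addn0 modnMDl modn_small //.
by congr mxvec_index; apply: val_inj; rewrite val_insubd ltn_ord.
Qed.

Lemma net_out (X : 'M[R]_d) : (forall m n, 0 <= X m n <= 1) ->
  forall (p : 'I_(chan L0.+3)) m n, net X L0.+3 p m n = Phi l i X m n.
Proof.
move=> X01 p m n.
have X_ge0 m' n' : 0 <= X m' n' by case/andP: (X01 m' n').
have [lt_L0 eq_L0 eq_L01] :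
  [/\ (L0.+2 < L0)%N = false, (L0.+2 == L0) = false & (L0.+2 == L0.+1) = false].
  by split; lia.
rewrite netS /kmid /kup /kleft /bias lt_L0 eq_L0 eq_L01 eqxx addr0.
under eq_bigr do rewrite !mul0r !addr0 mul1r padval_mid net_hats //.
have lt_pos : (m * d + n < chan L0.+2)%N.
  by rewrite chan_hats; have := ltn_ord m; have := ltn_ord n; nia.
rewrite (bigD1 (Ordinal lt_pos)) //= big1 => [|q neq_q]; last first.
  apply: hat_ramp_far => //; apply: contraNneq neq_q => eq_q; exact: val_inj.
rewrite addr0 ger0_relu ?hat_ge0 // /Phi mxE hat_liE /ramp subrr mulr0 addr0.
by rewrite /slope /offset entryE.
Qed.

Lemma chan_max : (\max_(j < L0.+3) chan j.+1)%N = (2 * D)%N.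
Proof.
apply/eqP; rewrite eqn_leq; apply/andP; split.
  apply/bigmax_leqP => j _; rewrite /chan /chan_count.
  by repeat case: ifP => //; nia.
have lt_L0 : (L0 < L0.+3)%N by lia.
by rewrite -chan_ramps (@leq_bigmax_cond _ _ (fun j : 'I_L0.+3 => chan j.+1) (Ordinal lt_L0)).
Qed.

Lemma Phi_cnn : CNN_class_on01 k (2 * D) L0.+3 (Phi (R := R) l i).
Proof.
exists chan, net_kernel, net_bias.
by split; [| exact: chan_out | exact: chan_max | exact: net_out].
Qed.

End Construction.

Theorem lemmaC2 (R : realType) (k d : nat) (l i : 'I_(d * d) -> nat)
  (hk : (0 < k)%N) (hd : (0 < d)%N) (hi : in_Il l i) :
  CNN_class_on01 k (2 * (d * d)) ((5 * d) %/ 2 + 3) (Phi (R := R) l i).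
Proof.
by rewrite addn3; apply: Phi_cnn => //; rewrite leq_divRL //; lia.
Qed.
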